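(* Let $0<c\le1$ and let $$X=\Big\{\sum_{i,j\in\mathbb Z}|\lambda_{i,j}-\lambda_{i,j+1}|^2 \ :\ \lambda_{i,j}\in\mathbb C,\ \sum_{i,j\in\mathbb Z}|\lambda_{i,j}|^2\le1,\ \sum_{i\in\mathbb Z}|\lambda_{i,0}|^2\ge c^2\Big\}\subset\mathbb R_{\ge0}.$$ Then $\frac{c^4}{3+18c^2}$ is a lower bound for $X$. *)

From HB Require Import structures.
From mathcomp Require Import all_boot all_order all_algebra.
From mathcomp Require Import all_classical all_reals all_analysis.
From mathcomp Require Import complex.
Set Implicit Arguments. Unset Strict Implicit. Unset Printing Implicit Defensive.
Import Order.TTheory GRing.Theory Num.Theory.

Definition sqmod (R : rcfType) (z : R[i]) : R := (ComplexField.Normc.normc z) ^+ 2.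

From HB Require Import structures.
From mathcomp Require Import all_boot all_order all_algebra.
From mathcomp Require Import all_classical all_reals all_analysis.
From mathcomp Require Import complex.
From mathcomp Require Import ring lra.
Set Implicit Arguments. Unset Strict Implicit. Unset Printing Implicit Defensive.
Import Order.TTheory GRing.Theory Num.Theory.
Local Open Scope ring_scope.
Local Open Scope classical_set_scope.

(* Along a row, |x_j|^2 - |x_(j+1)|^2 <= t/2 |x_j - x_(j+1)|^2 + (|x_j|^2 + |x_(j+1)|^2)/t.
   Telescoping from 0 to N on both half-lines and averaging over N = 1..M bounds
   2M |lam_(i,0)|^2 by the mass of the row near 0 plus M t/2 times its energy.
   Summing over finitely many rows carrying almost all of the mass c^2 of column 0,
   with total mass at most 1, t = 4/c^2 and M large, the energy exceeds c^4/3. *)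

Section SquaredModulus.
Variable R : rcfType.
Implicit Types (x y : R[i]) (t : R).

Lemma sqmodE (a b : R) : sqmod (a +i* b)%C = a ^+ 2 + b ^+ 2.
Proof. by rewrite /sqmod /= sqr_sqrtr // addr_ge0 // sqr_ge0. Qed.

Lemma sqmod_ge0 x : 0 <= sqmod x.
Proof. exact: sqr_ge0. Qed.

Lemma sqmodN x : sqmod (- x) = sqmod x.
Proof.
by case: x => a b; rewrite (_ : - (a +i* b) = (- a) +i* (- b))%C // !sqmodE !sqrrN.
Qed.

Lemma sqmod_distC x y : sqmod (x - y) = sqmod (y - x).
Proof. by rewrite -sqmodN opprB. Qed.

(* [|x|^2 - |y|^2 = Re((x - y) conj(x + y))], then AM-GM with weight [t]
   and [|x + y|^2 <= 2 (|x|^2 + |y|^2)]. *)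
Lemma sqmodB_le x y t : 0 < t ->
  sqmod x - sqmod y <= t / 2 * sqmod (x - y) + (sqmod x + sqmod y) / t.
Proof.
move=> t_gt0; case: x => a b; case: y => c d.
rewrite (_ : (a +i* b) - (c +i* d) = (a - c) +i* (b - d))%C // !sqmodE.
rewrite -(ler_pM2r t_gt0) [in X in _ <= X]mulrDl divfK ?gt_eqF //.
have := sqr_ge0 (t * (a - c) - (a + c)); have := sqr_ge0 (t * (b - d) - (b + d)).
have := sqr_ge0 (a - c); have := sqr_ge0 (b - d); nra.
Qed.

End SquaredModulus.

Section HalfLine.
Variables (R : rcfType) (g : nat -> R[i]) (t : R).
Hypothesis t_gt0 : 0 < t.

Let a j := sqmod (g j).
Let step j := t / 2 * sqmod (g j - g j.+1) + (a j + a j.+1) / t.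

Lemma step_ge0 j : 0 <= step j.
Proof.
have t_ge0 := ltW t_gt0.
by apply: addr_ge0; [apply: mulr_ge0 | apply: divr_ge0];
  rewrite ?divr_ge0 ?addr_ge0 ?sqmod_ge0.
Qed.

Lemma sqmod_drop_le N : a 0 - a N <= \sum_(0 <= j < N) step j.
Proof.
have -> : a 0 - a N = \sum_(0 <= j < N) (a j - a j.+1).
  rewrite (@telescope_sumr_eq _ 0 N (fun j => - a j)) // => [|j _];
  by rewrite opprK addrC.
by apply: ler_sum => j _; exact: sqmodB_le.
Qed.

Lemma sqmod_head_le N M : (N <= M)%N ->
  a 0 <= a N + (t / 2 * \sum_(0 <= j < M) sqmod (g j - g j.+1)
                + 2 * (\sum_(0 <= j < M.+1) a j) / t).
Proof.
move=> le_NM; rewrite -lerBlDl.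
apply: le_trans (sqmod_drop_le N) _.
apply: (@le_trans _ _ (\sum_(0 <= j < M) step j)).
  rewrite (big_cat_nat (leq0n N) le_NM) /= lerDl.
  by rewrite sumr_ge0 // => j _; exact: step_ge0.
rewrite big_split /= -mulr_sumr -mulr_suml lerD2l.
apply: ler_wpM2r; first by rewrite invr_ge0 ltW.
rewrite big_split /= mulr_natl mulr2n.
apply: lerD.
  by rewrite [leRHS]big_nat_recr //= lerDl sqmod_ge0.
by rewrite [leRHS]big_nat_recl //= lerDr sqmod_ge0.
Qed.

Lemma half_line_bound M :
  M%:R * a 0 <= (1 + 2 * M%:R / t) * \sum_(0 <= j < M.+1) a j
                + M%:R * t / 2 * \sum_(0 <= j < M) sqmod (g j - g j.+1).
Proof.
set A := \sum_(0 <= j < M.+1) a j.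
set D := \sum_(0 <= j < M) sqmod (g j - g j.+1).
have avg : \sum_(0 <= N < M) a 0
           <= \sum_(0 <= N < M) (a N.+1 + (t / 2 * D + 2 * A / t)).
  by apply: ler_sum_nat => N /andP[_ lt_NM]; exact: sqmod_head_le.
rewrite sumr_const_nat big_split sumr_const_nat subn0 /= in avg.
rewrite -[a 0 *+ M]mulr_natl -[(_ + _) *+ M]mulr_natl in avg.
have tail_le : \sum_(0 <= N < M) a N.+1 <= A.
  by rewrite /A big_nat_recl //= lerDr sqmod_ge0.
have -> : (1 + 2 * M%:R / t) * A + M%:R * t / 2 * D
          = A + M%:R * (t / 2 * D + 2 * A / t) by ring.
by apply: le_trans avg _; rewrite lerD2r.
Qed.

End HalfLine.

Lemma half_lines_bound (R : rcfType) (I : Type) (s : seq I) (G : I -> nat -> R[i])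
    (t : R) (M : nat) : 0 < t ->
  M%:R * \sum_(i <- s) sqmod (G i 0)
    <= (1 + 2 * M%:R / t) * \sum_(i <- s) \sum_(0 <= j < M.+1) sqmod (G i j)
       + M%:R * t / 2 * \sum_(i <- s) \sum_(0 <= j < M) sqmod (G i j - G i j.+1).
Proof.
move=> t_gt0; rewrite !mulr_sumr -big_split /=.
by apply: ler_sum => i _; exact: half_line_bound.
Qed.

Section FiniteSumsOfEsum.
Variable R : realType.

Lemma sum_le_esum (T : choiceType) (f : T -> R) (s : seq T) : uniq s ->
  ((\sum_(x <- s) f x)%:E <= \esum_(x in [set: T]) (f x)%:E)%E.
Proof.
move=> s_uniq; apply: esum_ge; exists [set` s]; first by split; [exact: finite_seq|].
by rewrite -fsbig_seq // sumEFin.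
Qed.

Lemma sum2_le_esum (I J : choiceType) (f : I -> J -> R) (s : seq I) (l : seq J) :
  uniq s -> uniq l ->
  ((\sum_(i <- s) \sum_(j <- l) f i j)%:E
     <= \esum_(ij in [set: I * J]) (f ij.1 ij.2)%:E)%E.
Proof.
move=> s_uniq l_uniq.
rewrite -(big_allpairs (F := fun ij => f ij.1 ij.2)); apply: sum_le_esum.
by apply: allpairs_uniq => // -[? ?] [? ?].
Qed.

Lemma esum_gt_sum (T : choiceType) (f : T -> R) (r : R) :
  (r%:E < \esum_(x in [set: T]) (f x)%:E)%E ->
  exists2 s : seq T, uniq s & r < \sum_(x <- s) f x.
Proof.
move=> /ereal_sup_gt [_ [A [A_fin _] <-]] r_lt.
exists (finmap.enum_fset (fset_set A)); first exact: finmap.fset_uniq.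
by rewrite -lte_fin -sumEFin -fsbig_finite.
Qed.

End FiniteSumsOfEsum.

Section Rows.
Variables (R : realType) (lam : int -> int -> R[i]) (s : seq int) (M : nat).
Hypothesis s_uniq : uniq s.

Lemma sum_half_line_le_esum (h : nat -> int) : injective h ->
  ((\sum_(i <- s) \sum_(0 <= j < M.+1) sqmod (lam i (h j)))%:E
     <= \esum_(ij in [set: int * int]) (sqmod (lam ij.1 ij.2))%:E)%E.
Proof.
move=> h_inj.
rewrite (eq_bigr (fun i => \sum_(j <- map h (index_iota 0 M.+1)) sqmod (lam i j)));
  last by move=> i _; rewrite big_map.
by apply: sum2_le_esum => //; rewrite map_inj_uniq ?iota_uniq.
Qed.

Lemma sum_energy_le_esum :
  ((\sum_(i <- s) \sum_(0 <= j < M) sqmod (lam i j%:Z - lam i j.+1%:Z)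
    + \sum_(i <- s) \sum_(0 <= j < M) sqmod (lam i (- j%:Z) - lam i (- j.+1%:Z)))%:E
     <= \esum_(ij in [set: int * int]) (sqmod (lam ij.1 ij.2 - lam ij.1 (ij.2 + 1)))%:E)%E.
Proof.
pose l := [seq j%:Z | j <- index_iota 0 M] ++ [seq - j.+1%:Z | j <- index_iota 0 M].
have -> : \sum_(i <- s) \sum_(0 <= j < M) sqmod (lam i j%:Z - lam i j.+1%:Z)
    + \sum_(i <- s) \sum_(0 <= j < M) sqmod (lam i (- j%:Z) - lam i (- j.+1%:Z))
    = \sum_(i <- s) \sum_(j <- l) sqmod (lam i j - lam i (j + 1)).
  rewrite -big_split /=; apply: eq_bigr => i _.
  rewrite big_cat !big_map; congr (_ + _); apply: eq_bigr => j _.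
    by rewrite -addn1 PoszD.
  by rewrite sqmod_distC -addn1 PoszD opprD addrNK.
apply: sum2_le_esum => //; rewrite cat_uniq !map_inj_uniq ?iota_uniq ?andbT //=.
- by apply/hasPn => _ /mapP [j _ ->]; apply/mapP => -[k _].
- by move=> j k /oppr_inj [].
- by move=> j k [].
Qed.

End Rows.

(* With t = 4/c^2 the estimate gives c^4/2 as M -> oo and the row mass tends to c^2;
   the slack 11/12 and 12/c^2 still leaves c^4/3 >= c^4/(3 + 18 c^2). *)
Lemma energy_bound_arith (R : realType) (c S D : R) (M : nat) : 0 < c ->
  11 / 12 * c ^+ 2 < S -> 12 / c ^+ 2 < M%:R ->
  2 * (M%:R * S) <= 2 * (1 + 2 * M%:R / (4 / c ^+ 2)) + M%:R * (4 / c ^+ 2) / 2 * D ->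
  c ^+ 4 / (3 + 18 * c ^+ 2) <= D.
Proof.
move=> c_gt0; set c2 := c ^+ 2; set m := M%:R.
have c2_gt0 : 0 < c2 by rewrite exprn_gt0.
have c2_neq0 : c2 != 0 by rewrite gt_eqF.
set x := D / c2; have -> : D = x * c2 by rewrite divfK.
move=> hS hM hineq.
have mc2 : 12 < m * c2 by rewrite -ltr_pdivrMr.
have m_gt0 : 0 < m by apply: lt_trans hM; rewrite divr_gt0.
have {}hineq : 2 * (m * S) <= 2 + m * c2 + 2 * (m * x).
  by move: hineq; congr (_ <= _); field.
have mS : 11 / 12 * (m * c2) < m * S by rewrite mulrCA ltr_pM2l.
have x_gt : c2 / 3 < x by rewrite -(ltr_pM2l m_gt0); lra.
have -> : c ^+ 4 = c2 * c2 by rewrite -exprD.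
rewrite ler_pdivrMr; last by lra.
nra.
Qed.

Theorem lemma6p8 (R : realType) (c : R) (hc0 : 0 < c) (hc1 : c <= 1)
  (lam : int -> int -> R[i])
  (hnorm : (\esum_(ij in [set: int * int]) (sqmod (lam ij.1 ij.2))%:E <= 1)%E)
  (hrow : ((c ^+ 2)%:E <= \esum_(i in [set: int]) (sqmod (lam i 0))%:E)%E) :
  ((c ^+ 4 / (3 + 18 * c ^+ 2))%:E
     <= \esum_(ij in [set: int * int]) (sqmod (lam ij.1 ij.2 - lam ij.1 (ij.2 + 1)))%:E)%E.
Proof.
have c2_gt0 : 0 < c ^+ 2 by rewrite exprn_gt0.
have [s s_uniq S_gt] : exists2 s : seq int,
    uniq s & 11 / 12 * c ^+ 2 < \sum_(i <- s) sqmod (lam i 0).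
  by apply: esum_gt_sum; apply: lt_le_trans hrow; rewrite lte_fin; lra.
pose M := (Num.truncn (12 / c ^+ 2)).+1.
have M_gt : 12 / c ^+ 2 < M%:R := truncnS_gt _.
pose t := 4 / c ^+ 2; have t_gt0 : 0 < t by rewrite divr_gt0.
have pos := half_lines_bound s (fun i j => lam i j%:Z) M t_gt0.
have neg := half_lines_bound s (fun i j => lam i (- j%:Z)) M t_gt0.
have pos_le1 : \sum_(i <- s) \sum_(0 <= j < M.+1) sqmod (lam i j%:Z) <= 1.
  rewrite -lee_fin; apply: le_trans hnorm.
  by apply: sum_half_line_le_esum => // j k [].
have neg_le1 : \sum_(i <- s) \sum_(0 <= j < M.+1) sqmod (lam i (- j%:Z)) <= 1.
  rewrite -lee_fin; apply: le_trans hnorm.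
  by apply: sum_half_line_le_esum => // j k /oppr_inj [].
apply: le_trans (sum_energy_le_esum lam M s_uniq); rewrite lee_fin.
apply: (energy_bound_arith hc0 S_gt M_gt); rewrite oppr0 in neg.
have coef_ge0 : 0 <= 1 + 2 * M%:R / t by rewrite addr_ge0 // divr_ge0 // ltW.
have := ler_wpM2l coef_ge0 (lerD pos_le1 neg_le1).
rewrite -/t; lra.
Qed.
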